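(* Let $\mathbf{B} \equiv \lambda xyz.\, x(yz)$, $\mathbf{S} \equiv \lambda xyz.\, xz(yz)$, and let $Y_0 \equiv \lambda f.\, \omega_f\omega_f$ with $\omega_f \equiv \lambda x.\, f(xx)$ (Curry's fixed point combinator). Then $\mathbf{B}Y_0 \neq_\beta \mathbf{B}Y_0\mathbf{S}$.
   Context: Terms of the untyped $\lambda$-calculus modulo $\alpha$-conversion; $=_\beta$ is $\beta$-convertibility; application associates to the left. *)

(* Untyped lambda calculus with de Bruijn indices
   (de Bruijn terms = lambda terms modulo alpha-conversion). *)
From Stdlib Require Import Arith Relations.

Inductive term : Type :=
| Var : nat -> term
| App : term -> term -> term
| Lam : term -> term.

Fixpoint lift (d c : nat) (t : term) : term :=
  match t with
  | Var n => if n <? c then Var n else Var (n + d)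
  | App a b => App (lift d c a) (lift d c b)
  | Lam a => Lam (lift d (S c) a)
  end.

Fixpoint subst (k : nat) (u : term) (t : term) : term :=
  match t with
  | Var n => if n <? k then Var n
             else if n =? k then lift k 0 u
             else Var (n - 1)
  | App a b => App (subst k u a) (subst k u b)
  | Lam a => Lam (subst (S k) u a)
  end.

Inductive beta : term -> term -> Prop :=
| beta_redex : forall t u, beta (App (Lam t) u) (subst 0 u t)
| beta_appl : forall a a' b, beta a a' -> beta (App a b) (App a' b)
| beta_appr : forall a b b', beta b b' -> beta (App a b) (App a b')
| beta_lam : forall a a', beta a a' -> beta (Lam a) (Lam a').

Definition beta_conv : term -> term -> Prop := clos_refl_sym_trans term beta.

(* B = \x y z. x (y z) *)
Definition Bc : term := Lam (Lam (Lam (App (Var 2) (App (Var 1) (Var 0))))).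
(* S = \x y z. x z (y z) *)
Definition Sc : term :=
  Lam (Lam (Lam (App (App (Var 2) (Var 0)) (App (Var 1) (Var 0))))).
(* omega_f = \x. f (x x), with f bound by the enclosing lambda *)
Definition omega_f : term := Lam (App (Var 1) (App (Var 0) (Var 0))).
Definition Y0 : term := Lam (App omega_f omega_f).

From Stdlib Require Import Arith Lia Relations.

(* By the Church-Rosser theorem it suffices to find two sets of terms, each
   closed under one-step beta-reduction and disjoint from the other, containing
   B Y0 and B Y0 S respectively.  Both terms have the Boehm tree
   \y z. y z (y z (...)), so the sets must describe all reducts syntactically.
   A reduct of B Y0 is B applied to a reduct of Y0, or \y z. N with N a reduct
   of Y0 (y z).  A reduct of B Y0 S is such a term applied to S, or \z. T with
   T a reduct of Y0 (S z).  Since S z M = \c. z c (M c), once T is unfolded to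
   \c. z c (z c (... (U c))) its spine ends in an application to the bound
   variable c, whereas the spine of a reduct of Y0 (y z) ends in
   omega_yz omega_yz or in a redex (\f. ...) (y z). *)

Notation beta_red := (clos_refl_trans term beta).

(** * Confluence of a diamond relation *)

Definition diamond {A} (R : relation A) : Prop :=
  forall x y z, R x y -> R x z -> exists2 w, R y w & R z w.

Section Diamond.

Context {A : Type} {R : relation A}.
Hypothesis R_diamond : diamond R.

Lemma diamond_strip x y z : R x y -> clos_refl_trans A R x z ->
  exists2 w, clos_refl_trans A R y w & R z w.
Proof.
  intros Rxy Rxz; revert y Rxy.
  induction Rxz as [x z Rxz | x | x z1 z2 _ IH1 _ IH2]; intros y Rxy.
  - destruct (R_diamond _ _ _ Rxy Rxz) as [w Ryw Rzw].
    exists w; [apply rt_step |]; assumption.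
  - exists y; [apply rt_refl | assumption].
  - destruct (IH1 y Rxy) as [w1 Ryw1 Rz1w1].
    destruct (IH2 w1 Rz1w1) as [w2 Rw1w2 Rz2w2].
    exists w2; [apply rt_trans with w1 |]; assumption.
Qed.

Lemma diamond_clos_rt : diamond (clos_refl_trans A R).
Proof.
  intros x y z Rxy; revert z.
  induction Rxy as [x y Rxy | x | x y1 y2 _ IH1 _ IH2]; intros z Rxz.
  - destruct (diamond_strip _ _ _ Rxy Rxz) as [w Ryw Rzw].
    exists w; [| apply rt_step]; assumption.
  - exists z; [assumption | apply rt_refl].
  - destruct (IH1 z Rxz) as [w1 Ry1w1 Rzw1].
    destruct (IH2 w1 Ry1w1) as [w2 Ry2w2 Rw1w2].
    exists w2; [| apply rt_trans with w1]; assumption.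
Qed.

End Diamond.

Lemma clos_rt_squeeze A (R S : relation A) :
  inclusion A R S -> inclusion A S (clos_refl_trans A R) ->
  forall x y, clos_refl_trans A S x y <-> clos_refl_trans A R x y.
Proof.
  intros RS SR x y; split; intro H; induction H;
    eauto using rt_refl, rt_trans, rt_step.
Qed.

(** * Lifting and substitution *)

Ltac nat_cases := repeat match goal with
  | |- context [?a <? ?b] => destruct (Nat.ltb_spec a b)
  | |- context [?a =? ?b] => destruct (Nat.eqb_spec a b)
  end.

Lemma lift_0 t c : lift 0 c t = t.
Proof.
  induction t in c |- *; simpl.
  - nat_cases; f_equal; lia.
  - f_equal; auto.
  - f_equal; auto.
Qed.

Lemma simpl_lift M k n i p : k <= i <= k + n ->
  lift p i (lift n k M) = lift (p + n) k M.
Proof.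
  induction M in k, i |- *; intros; simpl.
  - nat_cases; simpl; nat_cases; f_equal; lia.
  - f_equal; auto.
  - f_equal; apply IHM; lia.
Qed.

Lemma permute_lift M i k p n : i <= k ->
  lift n (p + k) (lift p i M) = lift p i (lift n k M).
Proof.
  induction M in i, k |- *; intros; simpl.
  - nat_cases; simpl; nat_cases; f_equal; lia.
  - f_equal; auto.
  - f_equal; rewrite <- Nat.add_succ_r; apply IHM; lia.
Qed.

Lemma simpl_subst M N k n i : k <= i <= k + n ->
  subst i N (lift (S n) k M) = lift n k M.
Proof.
  induction M in k, i |- *; intros; simpl.
  - nat_cases; simpl; nat_cases; f_equal; lia.
  - f_equal; auto.
  - f_equal; apply IHM; lia.
Qed.

Lemma commut_lift_subst_rec M N k p d : k <= p ->
  lift d k (subst p N M) = subst (d + p) N (lift d k M).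
Proof.
  induction M in k, p |- *; intros; simpl.
  - nat_cases; simpl; nat_cases; try (f_equal; lia).
    apply simpl_lift; lia.
  - f_equal; auto.
  - f_equal; rewrite <- Nat.add_succ_r; apply IHM; lia.
Qed.

Lemma commut_lift_subst M N p k d :
  lift d (p + k) (subst p N M) = subst p (lift d k N) (lift d (S (p + k)) M).
Proof.
  induction M in p |- *; simpl.
  - nat_cases; simpl; nat_cases; try (f_equal; lia).
    apply permute_lift; lia.
  - f_equal; auto.
  - f_equal; apply (IHM (S p)).
Qed.

Lemma distr_subst M N P p q :
  subst (p + q) P (subst p N M) = subst p (subst q P N) (subst (S (p + q)) P M).
Proof.
  induction M in p |- *; simpl.
  - nat_cases; simpl; nat_cases; try (f_equal; lia); subst.
    all: first [ apply simpl_subst; lia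
               | symmetry; apply simpl_subst; lia
               | rewrite commut_lift_subst_rec by lia; f_equal; lia ].
  - f_equal; auto.
  - f_equal; apply (IHM (S p)).
Qed.

(** * The Church-Rosser theorem *)

Inductive par : term -> term -> Prop :=
| par_var n : par (Var n) (Var n)
| par_app a a' b b' : par a a' -> par b b' -> par (App a b) (App a' b')
| par_lam a a' : par a a' -> par (Lam a) (Lam a')
| par_red a a' b b' :
    par a a' -> par b b' -> par (App (Lam a) b) (subst 0 b' a').

Lemma par_refl t : par t t.
Proof. induction t; constructor; assumption. Qed.

Lemma par_lift t t' d c : par t t' -> par (lift d c t) (lift d c t').
Proof.
  intros H; induction H in c |- *; simpl; try (constructor; auto; fail).
  - apply par_refl.
  - pose proof (commut_lift_subst a' b' 0 c d) as E; simpl in E.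
    rewrite E; constructor; auto.
Qed.

Lemma par_subst t t' u u' k :
  par t t' -> par u u' -> par (subst k u t) (subst k u' t').
Proof.
  intros H Hu; induction H in k |- *; simpl; try (constructor; auto; fail).
  - nat_cases; auto using par_refl, par_lift.
  - pose proof (distr_subst a' b' u' 0 k) as E; simpl in E.
    rewrite E; constructor; auto.
Qed.

(* Takahashi's complete development. *)
Fixpoint dev (t : term) : term :=
  match t with
  | Var n => Var n
  | Lam a => Lam (dev a)
  | App a b =>
      match a with
      | Lam a0 => subst 0 (dev b) (dev a0)
      | _ => App (dev a) (dev b)
      end
  end.

Lemma par_dev t t' : par t t' -> par t' (dev t).
Proof.
  induction 1 as [n | a a' b b' Ha IHa _ IHb | a a' _ IHa | a a' b b' _ IHa _ IHb];
    simpl.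
  - constructor.
  - destruct a; try (constructor; assumption).
    inversion Ha; subst. inversion IHa; subst. constructor; assumption.
  - constructor; assumption.
  - apply par_subst; assumption.
Qed.

Lemma par_diamond : diamond par.
Proof. intros x y z Hy Hz. exists (dev x); apply par_dev; assumption. Qed.

Lemma beta_red_app a a' b b' :
  beta_red a a' -> beta_red b b' -> beta_red (App a b) (App a' b').
Proof.
  intros Ha Hb; apply rt_trans with (App a' b).
  - induction Ha; eauto using rt_refl, rt_trans, rt_step, beta_appl.
  - induction Hb; eauto using rt_refl, rt_trans, rt_step, beta_appr.
Qed.

Lemma beta_red_lam a a' : beta_red a a' -> beta_red (Lam a) (Lam a').
Proof. induction 1; eauto using rt_refl, rt_trans, rt_step, beta_lam. Qed.

Lemma beta_red_iff_par t t' : clos_refl_trans term par t t' <-> beta_red t t'.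
Proof.
  apply clos_rt_squeeze.
  - intros x y H; induction H; constructor; auto using par_refl.
  - intros x y H; induction H.
    + apply rt_refl.
    + apply beta_red_app; assumption.
    + apply beta_red_lam; assumption.
    + apply rt_trans with (App (Lam a') b').
      * apply beta_red_app; [apply beta_red_lam |]; assumption.
      * apply rt_step, beta_redex.
Qed.

Lemma beta_red_diamond : diamond beta_red.
Proof.
  intros x y z Hy Hz.
  apply beta_red_iff_par in Hy, Hz.
  destruct (diamond_clos_rt par_diamond _ _ _ Hy Hz) as [w Hyw Hzw].
  exists w; apply beta_red_iff_par; assumption.
Qed.

Lemma beta_conv_common_reduct x y :
  beta_conv x y -> exists2 z, beta_red x z & beta_red y z.
Proof.
  induction 1 as [x y H | x | x y _ [z Hx Hy] | x y1 y2 _ [z1 Hx Hy1] _ [z2 Hy1' Hy2]].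
  - exists y; [apply rt_step | apply rt_refl]; assumption.
  - exists x; apply rt_refl.
  - exists z; assumption.
  - destruct (beta_red_diamond _ _ _ Hy1 Hy1') as [z Hz1 Hz2].
    exists z; [apply rt_trans with z1 | apply rt_trans with z2]; assumption.
Qed.

(** * Separating terms by reduction-closed sets *)

Definition beta_closed (P : term -> Prop) : Prop :=
  forall t t', P t -> beta t t' -> P t'.

Lemma beta_red_closed {P t t'} : beta_closed P -> beta_red t t' -> P t -> P t'.
Proof. intros HP H; induction H; eauto. Qed.

Lemma not_beta_conv_of_separating {P Q a b} :
  beta_closed P -> beta_closed Q -> (forall t, P t -> Q t -> False) ->
  P a -> Q b -> ~ beta_conv a b.
Proof.
  intros HP HQ disjoint Pa Qb Hab.
  destruct (beta_conv_common_reduct _ _ Hab) as [z Haz Hbz].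
  apply (disjoint z); [apply (beta_red_closed HP Haz) | apply (beta_red_closed HQ Hbz)];
    assumption.
Qed.

(** * The reducts of B Y0 *)

Ltac invert_beta := repeat match goal with
  | H : beta (Var _) _ |- _ => inversion H
  | H : beta (App _ _) _ |- _ => inversion H; subst; clear H
  | H : beta (Lam _) _ |- _ => inversion H; subst; clear H
  end.

(* The reducts [f^n (omega_f omega_f)] of the body of [Y0], [f] being [Var 0]. *)
Inductive Y0_body : term -> Prop :=
| Y0_body_omega : Y0_body (App omega_f omega_f)
| Y0_body_f t : Y0_body t -> Y0_body (App (Var 0) t).

Lemma Y0_body_beta : beta_closed Y0_body.
Proof.
  intros t t' H; revert t'; induction H; intros t' H'.
  - unfold omega_f in H'; invert_beta. apply Y0_body_f, Y0_body_omega.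
  - invert_beta; constructor; auto.
Qed.

Lemma Y0_body_lift t d c : Y0_body t -> lift d (S c) t = t.
Proof. induction 1; simpl; [reflexivity | f_equal; assumption]. Qed.

Lemma Y0_body_subst t k v : Y0_body t -> subst (S k) v t = t.
Proof. induction 1; simpl; [reflexivity | f_equal; assumption]. Qed.

Definition omega_yz : term :=
  Lam (App (App (Var 2) (Var 1)) (App (Var 0) (Var 0))).

(* The reducts of [Y0 (y z)], [y] and [z] being [Var 1] and [Var 0]. *)
Inductive Y0_yz : term -> Prop :=
| Y0_yz_unfold N : Y0_yz N -> Y0_yz (App (App (Var 1) (Var 0)) N)
| Y0_yz_omega : Y0_yz (App omega_yz omega_yz)
| Y0_yz_redex t : Y0_body t -> Y0_yz (App (Lam t) (App (Var 1) (Var 0))).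

Lemma Y0_yz_of_body t : Y0_body t -> Y0_yz (subst 0 (App (Var 1) (Var 0)) t).
Proof. induction 1; simpl; constructor; assumption. Qed.

Lemma Y0_yz_beta : beta_closed Y0_yz.
Proof.
  intros N N' H; revert N'; induction H; intros N' H'.
  - invert_beta; constructor; auto.
  - unfold omega_yz in H'; invert_beta. apply Y0_yz_unfold, Y0_yz_omega.
  - invert_beta.
    + apply Y0_yz_of_body; assumption.
    + constructor; eapply Y0_body_beta; eassumption.
Qed.

Inductive BY0_red : term -> Prop :=
| BY0_red_app t : Y0_body t -> BY0_red (App Bc (Lam t))
| BY0_red_lam N : Y0_yz N -> BY0_red (Lam (Lam N)).

Lemma BY0_red_beta : beta_closed BY0_red.
Proof.
  intros t t' H H'; destruct H.
  - inversion H'; subst.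
    + simpl; rewrite Y0_body_lift by assumption.
      apply BY0_red_lam, Y0_yz_redex; assumption.
    + unfold Bc in *; invert_beta.
    + invert_beta; constructor; eapply Y0_body_beta; eassumption.
  - invert_beta; constructor; eapply Y0_yz_beta; eassumption.
Qed.

(** * The reducts of B Y0 S *)

Definition Sz_unfolded (i : nat) : term :=
  Lam (Lam (App (App (Var (S (S i))) (Var 0)) (App (Var 1) (Var 0)))).

Definition omega_Sz_unfolded (i : nat) : term :=
  Lam (Lam (App (App (Var (S (S i))) (Var 0)) (App (App (Var 1) (Var 1)) (Var 0)))).

(* In the next three predicates [z] is [Var i]: [Sz i] holds of the reducts of
   [S z], [omega_Sz i] of those of [omega_f] with [f := S z], and [Y0_Sz i] of
   those of [Y0 (S z)].  [Y0_Sz_tail j b] says that [b] is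
   [z c (z c (... (U c)))] with [Y0_Sz j U], where [c] is [Var 0] and [z] is
   [Var j]; it describes the body of [\c. b], which is how [S z U] unfolds. *)
Inductive Sz (i : nat) : term -> Prop :=
| Sz_app : Sz i (App Sc (Var i))
| Sz_lam : Sz i (Sz_unfolded i).

Inductive omega_Sz (i : nat) : term -> Prop :=
| omega_Sz_lam F : Sz (S i) F -> omega_Sz i (Lam (App F (App (Var 0) (Var 0))))
| omega_Sz_unfold : omega_Sz i (omega_Sz_unfolded i).

Inductive Y0_Sz : nat -> term -> Prop :=
| Y0_Sz_omega i w1 w2 : omega_Sz i w1 -> omega_Sz i w2 -> Y0_Sz i (App w1 w2)
| Y0_Sz_unfold i F T : Sz i F -> Y0_Sz i T -> Y0_Sz i (App F T)
| Y0_Sz_redex i t F : Y0_body t -> Sz i F -> Y0_Sz i (App (Lam t) F)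
| Y0_Sz_lam i b : Y0_Sz_tail (S i) b -> Y0_Sz i (Lam b)
with Y0_Sz_tail : nat -> term -> Prop :=
| Y0_Sz_tail_end j U : Y0_Sz j U -> Y0_Sz_tail j (App U (Var 0))
| Y0_Sz_tail_unfold j b :
    Y0_Sz_tail j b -> Y0_Sz_tail j (App (App (Var j) (Var 0)) b).

Scheme Y0_Sz_ind2 := Induction for Y0_Sz Sort Prop
with Y0_Sz_tail_ind2 := Induction for Y0_Sz_tail Sort Prop.
Combined Scheme Y0_Sz_mutind from Y0_Sz_ind2, Y0_Sz_tail_ind2.

Ltac simpl_shift :=
  unfold Sz_unfolded, omega_Sz_unfolded, Sc in *; cbn [lift subst]; nat_cases;
  try lia; simpl; repeat (progress (rewrite ?Nat.add_1_r, ?Nat.sub_0_r; simpl)).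

Lemma Sz_beta i : beta_closed (Sz i).
Proof.
  intros F F' H H'; destruct H.
  - inversion H'; subst.
    + simpl; rewrite Nat.add_succ_r, Nat.add_1_r; apply Sz_lam.
    + unfold Sc in *; invert_beta.
    + invert_beta.
  - unfold Sz_unfolded in H'; invert_beta.
Qed.

Lemma Sz_lift i F c : Sz i F -> c <= i -> Sz (S i) (lift 1 c F).
Proof. intros H Hc; destruct H; simpl_shift; constructor. Qed.

Lemma Sz_subst i F k v : Sz (S i) F -> k <= i -> Sz i (subst k v F).
Proof. intros H Hc; destruct H; simpl_shift; constructor. Qed.

Lemma omega_Sz_beta i : beta_closed (omega_Sz i).
Proof.
  intros w w' H H'; destruct H.
  - inversion H'; subst. inversion H1; subst.
    + inversion H; subst; apply omega_Sz_unfold.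
    + constructor; eapply Sz_beta; eassumption.
    + invert_beta.
  - unfold omega_Sz_unfolded in H'; invert_beta.
Qed.

Lemma omega_Sz_lift i w c : omega_Sz i w -> c <= i -> omega_Sz (S i) (lift 1 c w).
Proof.
  intros H Hc; destruct H; simpl_shift.
  - apply omega_Sz_lam, Sz_lift; [assumption | lia].
  - apply omega_Sz_unfold.
Qed.

Lemma omega_Sz_subst i w k v : omega_Sz (S i) w -> k <= i -> omega_Sz i (subst k v w).
Proof.
  intros H Hc; destruct H; simpl_shift.
  - apply omega_Sz_lam, Sz_subst; [assumption | lia].
  - apply omega_Sz_unfold.
Qed.

Lemma Y0_Sz_of_body t i F : Y0_body t -> Sz i F -> Y0_Sz i (subst 0 F t).
Proof.
  induction 1; intros HF; simpl.
  - apply Y0_Sz_omega; apply omega_Sz_lam, Sz_lift; auto with arith.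
  - rewrite lift_0; apply Y0_Sz_unfold; auto.
Qed.

Lemma Y0_Sz_lift :
  (forall i T, Y0_Sz i T -> forall c, c <= i -> Y0_Sz (S i) (lift 1 c T)) /\
  (forall j b, Y0_Sz_tail j b ->
     forall c, 1 <= c <= j -> Y0_Sz_tail (S j) (lift 1 c b)).
Proof.
  apply Y0_Sz_mutind; intros; simpl.
  - apply Y0_Sz_omega; apply omega_Sz_lift; assumption.
  - apply Y0_Sz_unfold; [apply Sz_lift |]; auto.
  - rewrite Y0_body_lift by assumption.
    apply Y0_Sz_redex; [| apply Sz_lift]; assumption.
  - apply Y0_Sz_lam; apply H; lia.
  - nat_cases; try lia. apply Y0_Sz_tail_end; apply H; lia.
  - nat_cases; try lia. rewrite Nat.add_1_r; apply Y0_Sz_tail_unfold; apply H; lia.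
Qed.

(* The side condition on [Var 0] lets the tail be instantiated both below a
   further binder ([k >= 1]) and by the eta-like contraction [(\c. b) c]. *)
Lemma Y0_Sz_subst :
  (forall n T, Y0_Sz n T ->
     forall i k v, n = S i -> k <= i -> Y0_Sz i (subst k v T)) /\
  (forall n b, Y0_Sz_tail n b ->
     forall j k v, n = S j -> k <= j -> subst k v (Var 0) = Var 0 ->
     Y0_Sz_tail j (subst k v b)).
Proof.
  apply Y0_Sz_mutind; intros; subst; cbn [subst].
  - apply Y0_Sz_omega; apply omega_Sz_subst; assumption.
  - apply Y0_Sz_unfold; [apply Sz_subst |]; auto.
  - rewrite Y0_body_subst by assumption.
    apply Y0_Sz_redex; [| apply Sz_subst]; assumption.
  - apply Y0_Sz_lam; apply H; auto with arith.
  - match goal with Hv : subst _ _ (Var 0) = _ |- _ => cbn [subst] in Hv; rewrite Hv end.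
    apply Y0_Sz_tail_end; eapply H; eauto.
  - match goal with Hv : subst _ _ (Var 0) = _ |- _ => cbn [subst] in Hv; rewrite Hv end.
    nat_cases; try lia. replace (S j0 - 1) with j0 by lia.
    apply Y0_Sz_tail_unfold; eapply H; eauto.
Qed.

Lemma Y0_Sz_contract i a u : Y0_Sz i (App (Lam a) u) -> Y0_Sz i (subst 0 u a).
Proof.
  intros H; inversion H as [? w1 w2 Hw1 Hw2 | ? F T HF HT | ? t F Ht HF |]; subst.
  - inversion Hw1 as [F HF |]; subst; simpl.
    + rewrite lift_0.
      apply Y0_Sz_unfold; [apply Sz_subst; auto with arith | apply Y0_Sz_omega; assumption].
    + apply Y0_Sz_lam, Y0_Sz_tail_unfold, Y0_Sz_tail_end.
      apply Y0_Sz_omega; apply omega_Sz_lift; auto with arith.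
  - inversion HF; subst; simpl.
    apply Y0_Sz_lam, Y0_Sz_tail_unfold, Y0_Sz_tail_end.
    apply (proj1 Y0_Sz_lift); auto with arith.
  - apply Y0_Sz_of_body; assumption.
Qed.

Lemma Y0_Sz_tail_contract j a u :
  Y0_Sz_tail j (App (Lam a) u) -> Y0_Sz_tail j (subst 0 u a).
Proof.
  intros H; inversion H as [? U HU |]; subst.
  inversion HU as [| | | ? ? Ha]; subst.
  apply (proj2 Y0_Sz_subst _ _ Ha); auto with arith.
Qed.

Lemma Y0_Sz_beta t t' : beta t t' ->
  (forall i, Y0_Sz i t -> Y0_Sz i t') /\
  (forall j, Y0_Sz_tail j t -> Y0_Sz_tail j t').
Proof.
  induction 1 as [a u | a a' b Hab IH | a b b' Hbb IH | a a' Haa IH];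
    split; intros n Hn.
  - apply Y0_Sz_contract; assumption.
  - apply Y0_Sz_tail_contract; assumption.
  - inversion Hn as [? w1 w2 Hw1 Hw2 | ? F T HF HT | ? t F Ht HF |]; subst.
    + apply Y0_Sz_omega; [apply (omega_Sz_beta _ _ _ Hw1 Hab) | assumption].
    + apply Y0_Sz_unfold; [apply (Sz_beta _ _ _ HF Hab) | assumption].
    + inversion Hab as [| | | ? t' Ht']; subst.
      apply Y0_Sz_redex; [apply (Y0_body_beta _ _ Ht Ht') | assumption].
  - inversion Hn; subst.
    + apply Y0_Sz_tail_end, IH; assumption.
    + invert_beta.
  - inversion Hn as [? w1 w2 Hw1 Hw2 | ? F T HF HT | ? t F Ht HF |]; subst.
    + apply Y0_Sz_omega; [assumption | apply (omega_Sz_beta _ _ _ Hw2 Hbb)].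
    + apply Y0_Sz_unfold, IH; assumption.
    + apply Y0_Sz_redex; [assumption | apply (Sz_beta _ _ _ HF Hbb)].
  - inversion Hn; subst.
    + invert_beta.
    + apply Y0_Sz_tail_unfold, IH; assumption.
  - inversion Hn; subst; apply Y0_Sz_lam, IH; assumption.
  - inversion Hn.
Qed.

Lemma Y0_Sz_of_Y0_yz N : Y0_yz N -> Y0_Sz 0 (subst 1 Sc N).
Proof.
  induction 1; simpl.
  - apply Y0_Sz_unfold; [apply Sz_app | assumption].
  - apply Y0_Sz_omega; apply omega_Sz_lam, Sz_app.
  - rewrite Y0_body_subst by assumption.
    apply Y0_Sz_redex; [assumption | apply Sz_app].
Qed.

Inductive BY0S_red : term -> Prop :=
| BY0S_red_app X : BY0_red X -> BY0S_red (App X Sc)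
| BY0S_red_lam T : Y0_Sz 0 T -> BY0S_red (Lam T).

Lemma BY0S_red_beta : beta_closed BY0S_red.
Proof.
  intros t t' H H'; destruct H as [X HX | T HT].
  - inversion H'; subst.
    + inversion HX; subst; simpl.
      apply BY0S_red_lam, Y0_Sz_of_Y0_yz; assumption.
    + apply BY0S_red_app; eapply BY0_red_beta; eassumption.
    + unfold Sc in *; invert_beta.
  - inversion H'; subst; apply BY0S_red_lam; eapply Y0_Sz_beta; eassumption.
Qed.

Lemma Y0_Sz_tail_not_Y0_yz j N : Y0_Sz_tail j N -> ~ Y0_yz N.
Proof.
  induction 1 as [j U _ | j b _ IH]; intros HN;
    inversion HN as [N' HN' | |]; subst.
  - inversion HN'.
  - exact (IH HN').
Qed.

Lemma BY0_BY0S_disjoint t : BY0_red t -> BY0S_red t -> False.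
Proof.
  intros HL HR; destruct HL as [t Ht | N HN]; inversion HR; subst.
  - inversion Ht.
  - match goal with HT : Y0_Sz 0 (Lam N) |- _ => inversion HT; subst end.
    eapply Y0_Sz_tail_not_Y0_yz; eassumption.
Qed.

Theorem proposition3p5 :
  ~ beta_conv (App Bc Y0) (App (App Bc Y0) Sc).
Proof.
  apply (not_beta_conv_of_separating BY0_red_beta BY0S_red_beta BY0_BY0S_disjoint).
  - exact (BY0_red_app _ Y0_body_omega).
  - exact (BY0S_red_app _ (BY0_red_app _ Y0_body_omega)).
Qed.
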